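(* Let $(R,\mathfrak m)$ be a regular local ring with $\dim R\ge 2$, let $\{(R_i,\mathfrak m_i)\}_{i\ge 0}$ be an infinite sequence of local quadratic transforms with $R_0=R$, and let $S=\bigcup_{i\ge0}R_i$. Then $S$ is a DVR if and only if the maximal ideal of $S$ is principal and $S$ is dominated by a rank $1$ valuation ring.
   Context: A local quadratic transform of a regular local ring $(A,\mathfrak n)$ is a local ring $A[\mathfrak n/x]_{\mathfrak q}$ with $x\in\mathfrak n\setminus\mathfrak n^2$ and $\mathfrak q$ a prime ideal of $A[\mathfrak n/x]$ containing $\mathfrak n$. The sequence satisfies: for each $i\ge 0$, $R_{i+1}$ is a local quadratic transform of $R_i$, $R_i\subsetneq R_{i+1}$, and each $R_i$ is a regular local ring of dimension at least $2$ with maximal ideal $\mathfrak m_i$. $S$ is a local domain with maximal ideal $N=\bigcup_i\mathfrak m_i$; a valuation ring $U$ with maximal ideal $\mathfrak M_U$ dominates $S$ if $S\subseteq U$ and $\mathfrak M_U\cap S=N$. *)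

(* All rings in the statement are subrings of one fixed field K
   (the fraction field of R = R_0); subsets of K are modelled as K -> Prop. *)
From mathcomp Require Import all_boot all_order all_algebra.
Set Implicit Arguments. Unset Strict Implicit. Unset Printing Implicit Defensive.
Import GRing.Theory.
Local Open Scope ring_scope.

Section Defs.
Variable K : fieldType.
Implicit Types (A B I P U X : K -> Prop).

Definition ksubset A B := forall x, A x -> B x.
Definition keqset A B := forall x, A x <-> B x.

Definition subring A :=
  [/\ A 0, A 1, (forall x y, A x -> A y -> A (x - y))
    & (forall x y, A x -> A y -> A (x * y))].

Definition ideal A I :=
  [/\ ksubset I A, I 0, (forall x y, I x -> I y -> I (x + y))
    & (forall a x, A a -> I x -> I (a * x))].

(* non-units of A; for a local ring this is its maximal ideal *)
Definition nonunits A x := A x /\ ~ (exists y, A y /\ x * y = 1).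

Definition local_ring A := subring A /\ ideal A (nonunits A).

Definition prime_ideal A P :=
  [/\ ideal A P, ~ P 1
    & forall a b, A a -> A b -> P (a * b) -> P a \/ P b].

Definition ideal_gen A (s : seq K) x :=
  exists c : seq K, [/\ size c = size s, (forall i, (i < size c)%N -> A c`_i)
                      & x = \sum_(i < size s) c`_i * s`_i].

Definition noetherian A :=
  forall I, ideal A I -> exists s : seq K, keqset I (ideal_gen A s).

Definition prime_chain A (n : nat) :=
  exists P : nat -> K -> Prop,
    (forall i, (i <= n)%N -> prime_ideal A (P i)) /\
    (forall i, (i < n)%N -> ksubset (P i) (P i.+1) /\ ~ ksubset (P i.+1) (P i)).

Definition krull_dim A (d : nat) := prime_chain A d /\ ~ prime_chain A d.+1.

Definition regular_local A :=
  [/\ local_ring A, noetherian A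
    & exists d, krull_dim A d /\
        exists s : seq K, size s = d /\ keqset (nonunits A) (ideal_gen A s)].

Definition sq_ideal I x :=
  exists s : seq (K * K), (forall p, p \in s -> I p.1 /\ I p.2) /\
                          x = \sum_(p <- s) p.1 * p.2.

Definition adjoin A X z :=
  forall B, subring B -> ksubset A B -> ksubset X B -> B z.

Definition blowup A (x : K) :=
  adjoin A (fun z => exists y, nonunits A y /\ z = y / x).

Definition localize B (q : K -> Prop) z :=
  exists b c, [/\ B b, B c, ~ q c & z = b / c].

Definition local_quadratic_transform A B :=
  exists x, [/\ nonunits A x, ~ sq_ideal (nonunits A) x &
    exists q, [/\ prime_ideal (blowup A x) q, ksubset (nonunits A) q
                & keqset B (localize (blowup A x) q)]].

Definition frac_field_is_K A :=
  forall z, exists a b, [/\ A a, A b, b != 0 & z = a / b].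

Definition union_seq (Rs : nat -> K -> Prop) z := exists i, Rs i z.

Definition principal_ideal A I :=
  exists t, A t /\ keqset I (fun z => exists a, A a /\ z = a * t).

Definition DVR A :=
  exists v : K -> int,
    [/\ (forall x y, x != 0 -> y != 0 -> v (x * y) = v x + v y),
        (forall x y, x != 0 -> y != 0 -> x + y != 0 ->
                     (v x <= v (x + y)) \/ (v y <= v (x + y))),
        (forall n : int, exists x, x != 0 /\ v x = n)
      & keqset A (fun z => z = 0 \/ (z != 0 /\ 0 <= v z))].

Definition valuation_ring U :=
  subring U /\ forall z, z != 0 -> U z \/ U z^-1.

Definition dominates U A :=
  ksubset A U /\ keqset (fun z => A z /\ nonunits U z) (nonunits A).

End Defs.

From mathcomp Require Import all_boot all_order all_algebra.
From mathcomp Require Import zify ring.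
From Stdlib Require Import Classical ClassicalEpsilon.
Set Implicit Arguments. Unset Strict Implicit. Unset Printing Implicit Defensive.
Import GRing.Theory Order.TTheory Num.Theory.
Local Open Scope ring_scope.

(* Forward: the valuation ring of a discrete valuation v is a rank-one
   valuation ring dominating itself, and its maximal ideal is generated by any
   element of value 1.  Backward: let tS be the maximal ideal of S and U a
   dominating rank-one valuation ring.  The elements of U divisible by every
   power of t form a prime ideal of U strictly inside its maximal ideal, hence
   zero; so every nonzero element of S is t^n times a unit, every nonzero
   element of K is t^k times a unit of S, and k is a discrete valuation whose
   valuation ring is S. *)

Section Subring.
Variables (K : fieldType) (A : K -> Prop).
Hypothesis sA : subring A.

Lemma subring0 : A 0. Proof. by case: sA. Qed.
Lemma subring1 : A 1. Proof. by case: sA. Qed.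

Lemma subringB x y : A x -> A y -> A (x - y).
Proof. by case: sA => _ _ h _; apply: h. Qed.

Lemma subringM x y : A x -> A y -> A (x * y).
Proof. by case: sA => _ _ _ h; apply: h. Qed.

Lemma subringN x : A x -> A (- x).
Proof. by move=> Ax; rewrite -sub0r; apply: subringB Ax; apply: subring0. Qed.

Lemma subringD x y : A x -> A y -> A (x + y).
Proof. by move=> Ax Ay; rewrite -[y]opprK; apply: subringB (subringN Ay). Qed.

Lemma subringX x n : A x -> A (x ^+ n).
Proof.
move=> Ax; elim: n => [|n IHn]; first by rewrite expr0; apply: subring1.
by rewrite exprS; apply: subringM.
Qed.

Lemma nonunits0 : nonunits A 0.
Proof.
split; first exact: subring0.
by case=> y [_ /eqP]; rewrite mul0r eq_sym oner_eq0.
Qed.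

Lemma not_nonunits_inv x : A x -> ~ nonunits A x -> A x^-1.
Proof.
move=> Ax Nx; have [y [Ay xy1]] : exists y, A y /\ x * y = 1.
  by apply: NNPP => H; apply: Nx.
have x0 : x != 0 by apply: contra_eq_neq xy1 => ->; rewrite mul0r eq_sym oner_eq0.
by rewrite -[x^-1]mulr1 -xy1 mulKf.
Qed.

End Subring.

Lemma not_ksubset (K : fieldType) (P Q : K -> Prop) :
  ~ ksubset P Q -> exists x, P x /\ ~ Q x.
Proof.
move=> nPQ; apply: NNPP => H; apply: nPQ => x Px.
by apply: NNPP => nQx; apply: H; exists x.
Qed.

Section PrimeIdeals.
Variables (K : fieldType) (A : K -> Prop).

Lemma prime_ideal0 P : prime_ideal A P -> P 0.
Proof. by case=> -[]. Qed.

Lemma zero_prime_ideal : subring A -> prime_ideal A (fun z => z = 0).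
Proof.
move=> sA; split.
- split => //.
  + by move=> x ->; apply: subring0.
  + by move=> x y -> ->; rewrite addr0.
  + by move=> a x _ ->; rewrite mulr0.
- by move/eqP; rewrite oner_eq0.
- by move=> a b _ _ /eqP; rewrite mulf_eq0 => /orP [] /eqP; [left|right].
Qed.

Lemma prime_ideal_nonunits P x : prime_ideal A P -> P x -> nonunits A x.
Proof.
move=> [[PA _ _ PM] P1 _] Px; split; first exact: PA.
by case=> y [Ay xy1]; apply: P1; rewrite -xy1 mulrC; apply: PM.
Qed.

Lemma prime_ideal_root P y n : prime_ideal A P -> subring A -> A y ->
  P (y ^+ n.+1) -> P y.
Proof.
move=> [_ _ Pprime] sA Ay; elim: n => [|n IHn]; first by rewrite expr1.
rewrite exprS => /(Pprime _ _ Ay (subringX sA n.+1 Ay)) [] //; exact: IHn.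
Qed.

Lemma prime_chain1_witness : prime_chain A 1 ->
  exists p, [/\ p != 0, A p & ~ A p^-1].
Proof.
case=> P [Pprime Pchain]; have [_ /not_ksubset [p [P1p NP0p]]] := Pchain 0%N isT.
have [[P1A _ _ P1M] P1_1 _] := Pprime 1%N isT.
have p0 : p != 0.
  by apply: contra_not_neq NP0p => ->; apply: prime_ideal0 (Pprime 0%N isT).
exists p; split; [by []|exact: P1A|move=> Api].
by apply: P1_1; rewrite -(mulVf p0); apply: P1M.
Qed.

End PrimeIdeals.

Definition infinitely_divisible (K : fieldType) (U : K -> Prop) t z :=
  U z /\ forall n, exists a, U a /\ z = t ^+ n * a.

Section ValuationRing.
Variables (K : fieldType) (U : K -> Prop).
Hypothesis vU : valuation_ring U.
Let sU : subring U := proj1 vU.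

Lemma valuation_ring_nonunits_prime : prime_ideal U (nonunits U).
Proof.
split.
- split.
  + by move=> x [].
  + exact: nonunits0.
  + move=> x y [Ux Nx] [Uy Ny]; split; first exact: subringD.
    have [->|x0] := eqVneq x 0; first by rewrite add0r.
    have [->|y0] := eqVneq y 0; first by rewrite addr0.
    case=> z [Uz xyz1]; have [_ /(_ (x / y))] := vU.
    case; first by rewrite mulf_neq0 ?invr_neq0.
    * move=> Uxy; apply: Ny; exists ((1 + x / y) * z); split.
        by apply: subringM => //; apply: subringD => //; apply: subring1.
      by rewrite mulrA mulrDr mulr1 [y * _]mulrC divfK // addrC.
    * rewrite invf_div => Uyx; apply: Nx; exists ((1 + y / x) * z); split.
        by apply: subringM => //; apply: subringD => //; apply: subring1.
      by rewrite mulrA mulrDr mulr1 [x * _]mulrC divfK.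
  + move=> a x Ua [Ux Nx]; split; first exact: subringM.
    case=> z [Uz axz1]; apply: Nx; exists (a * z); split; first exact: subringM.
    by rewrite mulrCA mulrA.
- by case=> _; apply; exists 1; rewrite mulr1; split; first exact: subring1.
- move=> a b Ua Ub [_ Nab]; apply: NNPP => /not_or_and [Na Nb].
  have Uai := not_nonunits_inv Ua Na; have Ubi := not_nonunits_inv Ub Nb.
  have a0 : a != 0 by apply: contra_not_neq Na => ->; apply: nonunits0.
  have b0 : b != 0 by apply: contra_not_neq Nb => ->; apply: nonunits0.
  apply: Nab; exists (a^-1 * b^-1); rewrite mulrACA !divff // mulr1.
  by split => //; apply: subringM.
Qed.

Lemma valuation_ring_dvd_total c s : s != 0 ->
  (exists d, U d /\ c = s * d) \/ (exists d, U d /\ s = c * d).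
Proof.
move=> s0; have [->|c0] := eqVneq c 0.
  by left; exists 0; rewrite mulr0; split => //; apply: subring0.
have [_ /(_ (c / s))] := vU; case; first by rewrite mulf_neq0 ?invr_neq0.
- by left; exists (c / s); rewrite [s * _]mulrC divfK.
- by rewrite invf_div; right; exists (s / c); rewrite [c * _]mulrC divfK.
Qed.

Variable t : K.
Hypotheses (t0 : t != 0) (Nt : nonunits U t).

Lemma not_infinitely_divisible_pow c : U c -> ~ infinitely_divisible U t c ->
  exists m d, [/\ U d, t ^+ m = c * d & ~ exists e, U e /\ c = t ^+ m * e].
Proof.
move=> Uc Dc; have [m Ncm] : exists m, ~ exists e, U e /\ c = t ^+ m * e.
  by apply: NNPP => H; apply: Dc; split => // n; apply: NNPP => Hn; apply: H; exists n.
have [//|[d [Ud tmcd]]] := valuation_ring_dvd_total c (expf_neq0 m t0).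
by exists m, d.
Qed.

Lemma infinitely_divisible_prime : prime_ideal U (infinitely_divisible U t).
Proof.
split.
- split.
  + by move=> z [].
  + split; first exact: subring0.
    by move=> n; exists 0; rewrite mulr0; split => //; apply: subring0.
  + move=> x y [Ux Dx] [Uy Dy]; split; first exact: subringD.
    move=> n; have [a [Ua ->]] := Dx n; have [b [Ub ->]] := Dy n.
    by exists (a + b); rewrite mulrDr; split => //; apply: subringD.
  + move=> c x Uc [Ux Dx]; split; first exact: subringM.
    move=> n; have [a [Ua ->]] := Dx n.
    by exists (c * a); rewrite mulrCA; split => //; apply: subringM.
- case=> _ /(_ 1%N) [a [Ua ta]]; case: Nt => _; apply.
  by exists a; split => //; rewrite [RHS]ta expr1.
- move=> a b Ua Ub [_ Dab]; apply: NNPP => /not_or_and [Da Db].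
  have [m [c [Uc tmac Nam]]] := not_infinitely_divisible_pow Ua Da.
  have [k [d [Ud tkbd _]]] := not_infinitely_divisible_pow Ub Db.
  have [e [Ue abe]] := Dab (m + k)%N.
  (* [t^(m+k) = ab cd = t^(m+k) ecd] makes [ed] the inverse of [c], so [a = t^m ed] *)
  have ecd1 : e * c * d = 1.
    apply: (mulfI (expf_neq0 (m + k) t0)).
    by rewrite mulr1 !mulrA -abe exprD tmac tkbd; ring.
  apply: Nam; exists (e * d); split; first exact: subringM.
  by rewrite -[a]mulr1 -ecd1 tmac; ring.
Qed.

Lemma infinitely_divisible_nonunits :
  ksubset (infinitely_divisible U t) (nonunits U).
Proof.
move=> z [_ /(_ 1%N) [a [Ua ->]]]; rewrite expr1 mulrC.
by have [[_ _ _ NM] _ _] := valuation_ring_nonunits_prime; apply: NM.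
Qed.

Lemma not_infinitely_divisible_t : ~ infinitely_divisible U t t.
Proof.
case=> _ /(_ 2%N) [a [Ua tta]]; case: Nt => _; apply; exists a; split => //.
by apply: (mulfI t0); rewrite mulr1 mulrA -expr2 -tta.
Qed.

Lemma krull_dim1_infinitely_divisible z : krull_dim U 1 ->
  infinitely_divisible U t z -> z = 0.
Proof.
move=> [_ no_chain2] Dz; apply: NNPP => z0; apply: no_chain2.
exists (fun i => match i with
                 | 0%N => fun z => z = 0
                 | 1%N => infinitely_divisible U t
                 | _ => nonunits U end); split.
  case=> [|[|[|]]] //= _.
  - exact: zero_prime_ideal.
  - exact: infinitely_divisible_prime.
  - exact: valuation_ring_nonunits_prime.
case=> [|[|]] //= _; split.
- by move=> _ ->; apply: prime_ideal0 infinitely_divisible_prime.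
- by move/(_ z Dz).
- exact: infinitely_divisible_nonunits.
- by move/(_ t Nt); apply: not_infinitely_divisible_t.
Qed.

End ValuationRing.

Section DiscreteValuation.
Variables (K : fieldType) (A : K -> Prop) (v : K -> int).
Hypothesis vM : forall x y, x != 0 -> y != 0 -> v (x * y) = v x + v y.
Hypothesis vD : forall x y, x != 0 -> y != 0 -> x + y != 0 ->
  (v x <= v (x + y)) \/ (v y <= v (x + y)).
Hypothesis vS : forall n : int, exists x, x != 0 /\ v x = n.
Hypothesis vA : keqset A (fun z => z = 0 \/ (z != 0 /\ 0 <= v z)).

Lemma valuation1 : v 1 = 0.
Proof.
have one0 : (1 : K) != 0 := oner_neq0 K.
by have := vM one0 one0; rewrite mulr1; lia.
Qed.

Lemma valuationN x : x != 0 -> v (- x) = v x.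
Proof.
move=> x0; have N1_0 : (-1 : K) != 0 by rewrite oppr_eq0 oner_neq0.
have vN1 : v (-1) = 0 by have := vM N1_0 N1_0; rewrite mulrNN mulr1 valuation1; lia.
by rewrite -mulN1r vM // vN1 add0r.
Qed.

Lemma valuationV x : x != 0 -> v x^-1 = - v x.
Proof. by move=> x0; have := vM x0 (invr_neq0 x0); rewrite divff // valuation1; lia. Qed.

Lemma valuationX x n : x != 0 -> v (x ^+ n) = v x * n%:Z.
Proof.
move=> x0; elim: n => [|n IHn]; first by rewrite expr0 valuation1 mulr0.
by rewrite exprS vM ?expf_neq0 // IHn intS mulrDr mulr1.
Qed.

Lemma DVR_subring : subring A.
Proof.
split.
- by apply/vA; left.
- by apply/vA; right; rewrite valuation1 oner_neq0.
- move=> x y /vA Ax /vA Ay; apply/vA.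
  have [->|xy0] := eqVneq (x - y) 0; [by left|right; split => //].
  have [x0|x0] := eqVneq x 0.
    move: xy0; rewrite x0 sub0r oppr_eq0 => y0; rewrite valuationN //.
    by case: Ay => [/eqP|[]//]; rewrite (negbTE y0).
  have [y0|y0] := eqVneq y 0.
    by rewrite y0 subr0; case: Ax => [/eqP|[]//]; rewrite (negbTE x0).
  case: Ax => [/eqP|[_ vx]]; first by rewrite (negbTE x0).
  case: Ay => [/eqP|[_ vy]]; first by rewrite (negbTE y0).
  have Ny0 : - y != 0 by rewrite oppr_eq0.
  by case: (vD x0 Ny0 xy0); [apply: le_trans|rewrite valuationN //; apply: le_trans].
- move=> x y /vA Ax /vA Ay; apply/vA.
  have [->|x0] := eqVneq x 0; first by left; rewrite mul0r.
  have [->|y0] := eqVneq y 0; first by left; rewrite mulr0.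
  case: Ax => [/eqP|[_ vx]]; first by rewrite (negbTE x0).
  case: Ay => [/eqP|[_ vy]]; first by rewrite (negbTE y0).
  by right; rewrite mulf_neq0 // vM // addr_ge0.
Qed.

Lemma DVR_valuation_ring : valuation_ring A.
Proof.
split; first exact: DVR_subring.
move=> z z0; have [vz|vz] := lerP 0 (v z); first by left; apply/vA; right.
by right; apply/vA; right; rewrite invr_neq0 // valuationV // oppr_ge0 ltW.
Qed.

Lemma DVR_nonunits x : nonunits A x <-> x = 0 \/ (x != 0 /\ 0 < v x).
Proof.
split.
- move=> [/vA [->|[x0 vx]] Nx]; [by left|right; split => //].
  rewrite lt_def vx andbT; apply: contra_notN Nx => /eqP vx0.
  exists x^-1; rewrite divff //; split => //; apply/vA; right.
  by rewrite invr_neq0 // valuationV // vx0 oppr0.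
- case=> [->|[x0 vx]]; first exact: nonunits0 DVR_subring.
  split; first by apply/vA; right; split => //; exact: ltW.
  case=> y [/vA [y0|[y0 vy]] xy1].
    by move: xy1; rewrite y0 mulr0 => /eqP; rewrite eq_sym oner_eq0.
  by have := vM x0 y0; rewrite xy1 valuation1; lia.
Qed.

Lemma DVR_maximal_principal : principal_ideal A (nonunits A).
Proof.
have [t [t0 vt]] := vS 1; exists t; split; first by apply/vA; right; rewrite vt.
move=> z; split.
- move/DVR_nonunits => [->|[z0 vz]].
    by exists 0; rewrite mul0r; split => //; apply/vA; left.
  exists (z / t); rewrite divfK //; split => //; apply/vA; right.
  by rewrite mulf_neq0 ?invr_neq0 // vM ?invr_neq0 // valuationV // vt; lia.
- case=> a [/vA [->|[a0 va]] ->]; apply/DVR_nonunits; first by left; rewrite mul0r.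
  by right; rewrite mulf_neq0 // vM // vt; lia.
Qed.

(* [y^(n+1)/x] lies in [A] as soon as [n >= v x]. *)
Lemma DVR_prime_nonunits P x : prime_ideal A P -> P x -> x != 0 ->
  ksubset (nonunits A) P.
Proof.
move=> Pprime Px x0 y /DVR_nonunits [->|[y0 vy]]; first exact: prime_ideal0 Pprime.
have /DVR_nonunits [/eqP|[_ vx]] := prime_ideal_nonunits Pprime Px.
  by rewrite (negbTE x0).
have Ay : A y by apply/vA; right; split => //; exact: ltW.
apply: (prime_ideal_root (n := `|v x|%N) Pprime DVR_subring Ay).
have yn0 : y ^+ `|v x|.+1 != 0 by rewrite expf_neq0.
rewrite -(divfK x0 (y ^+ _)); case: Pprime => -[_ _ _ PM] _ _; apply: PM Px.
apply/vA; right; rewrite mulf_neq0 ?invr_neq0 // vM ?invr_neq0 //.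
rewrite valuationV // valuationX //; split => //.
have vxn : v x = `|v x|%N by rewrite gez0_abs // ltW.
nia.
Qed.

Lemma DVR_krull_dim1 : krull_dim A 1.
Proof.
split.
- exists (fun i => if i is 0%N then (fun z => z = 0) else nonunits A); split.
    case=> [|[|]] //= _.
    + exact: zero_prime_ideal DVR_subring.
    + exact: valuation_ring_nonunits_prime DVR_valuation_ring.
  case=> //= _; split; first by move=> _ ->; apply: nonunits0 DVR_subring.
  have [t [t0 vt]] := vS 1 => N_0; move/eqP: (t0); apply; apply: N_0.
  by apply/DVR_nonunits; right; rewrite vt.
- case=> P [Pprime Pchain].
  have [_ /not_ksubset [x [P1x NP0x]]] := Pchain 0%N isT.
  have [_ /not_ksubset [y [P2y NP1y]]] := Pchain 1%N isT.
  have x0 : x != 0.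
    by apply: contra_not_neq NP0x => ->; apply: prime_ideal0 (Pprime 0%N isT).
  apply/NP1y/(DVR_prime_nonunits (Pprime 1%N isT) P1x x0).
  exact: prime_ideal_nonunits (Pprime 2%N isT) P2y.
Qed.

End DiscreteValuation.

Definition unit_in (K : fieldType) (S : K -> Prop) u := [/\ u != 0, S u & S u^-1].

Definition has_order (K : fieldType) (S : K -> Prop) t z (k : int) :=
  exists u, unit_in S u /\ z = t ^ k * u.

Section Uniformizer.
Variables (K : fieldType) (S : K -> Prop) (t : K).
Hypotheses (sS : subring S) (St : S t) (t0 : t != 0) (NSti : ~ S t^-1).
Hypothesis order_exists : forall z, z != 0 -> exists k, has_order S t z k.

Lemma unit_inM u w : unit_in S u -> unit_in S w -> unit_in S (u * w).
Proof.
move=> [u0 Su Sui] [w0 Sw Swi].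
by split; [rewrite mulf_neq0|apply: subringM|rewrite invfM; apply: subringM].
Qed.

Lemma unit_inV u : unit_in S u -> unit_in S u^-1.
Proof. by move=> [u0 Su Sui]; split; rewrite ?invr_neq0 ?invrK. Qed.

Lemma not_inv_exprS n : ~ S (t ^+ n.+1)^-1.
Proof.
move=> Sti; apply: NSti.
have -> : t^-1 = t ^+ n * (t ^+ n.+1)^-1 by rewrite exprS; field; rewrite expf_neq0.
by apply: (subringM sS) Sti; apply: subringX.
Qed.

Lemma unit_in_exprz k : unit_in S (t ^ k) -> k = 0.
Proof.
case: k => [[|n]|n] [_ Stk Stki] //; exfalso.
- exact: not_inv_exprS Stki.
- exact: not_inv_exprS Stk.
Qed.

Lemma has_order_exprz k : has_order S t (t ^ k) k.
Proof.
exists 1; rewrite mulr1; split => //.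
by split; rewrite ?oner_neq0 ?invr1 //; apply: subring1.
Qed.

Lemma has_orderM x y k l :
  has_order S t x k -> has_order S t y l -> has_order S t (x * y) (k + l).
Proof.
move=> [u [Uu ->]] [w [Uw ->]]; exists (u * w); split; first exact: unit_inM.
by rewrite expfzDr //; ring.
Qed.

Lemma has_orderV z k : has_order S t z k -> has_order S t z^-1 (- k).
Proof.
move=> [u [Uu ->]]; exists u^-1; split; first exact: unit_inV.
by rewrite invfM -invr_expz.
Qed.

Lemma has_order_neq0 z k : has_order S t z k -> z != 0.
Proof. by move=> [u [[u0 _ _] ->]]; rewrite mulf_neq0 // expfz_neq0. Qed.

Lemma has_order_uniq z k l : has_order S t z k -> has_order S t z l -> k = l.
Proof.
move=> [u [Uu ez]] [w [Uw ew]]; have [u0 _ _] := Uu.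
have /unit_in_exprz : unit_in S (t ^ (k - l)).
  suff -> : t ^ (k - l) = w / u by apply/unit_inM/unit_inV.
  rewrite expfzDr // -invr_expz; apply/eqP; rewrite eqr_div ?expfz_neq0 //.
  by rewrite -ez ew mulrC.
by move/eqP; rewrite subr_eq0 => /eqP.
Qed.

Lemma has_order_ge0 z k : S z -> has_order S t z k -> 0 <= k.
Proof.
case: k => // n Sz [u [[u0 Su Sui] ez]].
suff /unit_in_exprz -> : unit_in S (t ^ Negz n) by [].
split; first exact: expfz_neq0.
- by rewrite -(mulfK u0 (t ^ _)) -ez; apply: (subringM sS).
- by rewrite invrK; apply: subringX.
Qed.

Lemma has_order_mem z k : has_order S t z k -> 0 <= k -> S z.
Proof.
move=> [u [[_ Su _] ->]]; case: k => // n _.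
by rewrite -exprnP; apply: (subringM sS) Su; apply: subringX.
Qed.

Definition t_order z := epsilon (inhabits (0 : int)) (has_order S t z).

Lemma t_orderP z : z != 0 -> has_order S t z (t_order z).
Proof. by move=> z0; apply: epsilon_spec; apply: order_exists. Qed.

Lemma t_order_eq z k : has_order S t z k -> t_order z = k.
Proof. by move=> zk; exact: has_order_uniq (t_orderP (has_order_neq0 zk)) zk. Qed.

(* [x + y = t^(t_order x) (u + t^m w)] with [m = t_order y - t_order x >= 0]. *)
Lemma t_order_addl x y : x != 0 -> y != 0 -> x + y != 0 ->
  t_order x <= t_order y -> t_order x <= t_order (x + y).
Proof.
move=> x0 y0 xy0 le_xy.
have [u [[_ Su _] ex]] := t_orderP x0; have [w [[_ Sw _] ey]] := t_orderP y0.
have [m em] : exists m : nat, t_order y - t_order x = m%:Z.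
  by exists `|t_order y - t_order x|%N; rewrite gez0_abs // subr_ge0.
pose w' := u + t ^+ m * w.
have exy : x + y = t ^ t_order x * w'.
  rewrite /w' {1}ex {1}ey exprnP -em mulrDr mulrA -expfzDr //.
  by congr (_ + _ * _); congr (_ ^ _); lia.
have Sw' : S w' by apply: (subringD sS) Su _; apply: (subringM sS) Sw; apply: subringX.
have w'0 : w' != 0 by apply: contra_neq xy0 => w'0; rewrite exy w'0 mulr0.
have [l Hl] := order_exists w'0.
have -> : t_order (x + y) = t_order x + l.
  by apply: t_order_eq; rewrite exy; apply: has_orderM Hl; apply: has_order_exprz.
by rewrite lerDl (has_order_ge0 Sw' Hl).
Qed.

Lemma DVR_of_uniformizer : DVR S.
Proof.
exists t_order; split.
- by move=> x y x0 y0; apply/t_order_eq/has_orderM; apply: t_orderP.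
- move=> x y x0 y0 xy0; have [le_xy|lt_yx] := lerP (t_order x) (t_order y).
    by left; apply: t_order_addl.
  by right; rewrite addrC; apply: t_order_addl; rewrite 1?addrC // ltW.
- by move=> n; exists (t ^ n); rewrite expfz_neq0 // (t_order_eq (has_order_exprz n)).
- move=> z; split.
  + have [->|z0 Sz] := eqVneq z 0; [by left|right; split => //].
    exact: has_order_ge0 Sz (t_orderP z0).
  + case=> [->|[z0 ge0]]; first exact: subring0.
    exact: has_order_mem (t_orderP z0) ge0.
Qed.

End Uniformizer.

Section PrincipalDominated.
Variables (K : fieldType) (S U : K -> Prop) (t : K).
Hypotheses (sS : subring S) (fracS : frac_field_is_K S).
Hypothesis tS : keqset (nonunits S) (fun z => exists a, S a /\ z = a * t).
Hypotheses (vU : valuation_ring U) (dimU : krull_dim U 1) (domU : dominates U S).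

Lemma uniformizer_nonunit : nonunits S t.
Proof. by apply/tS; exists 1; rewrite mul1r; split => //; apply: subring1. Qed.

Lemma uniformizer_mem : S t.
Proof. by case: uniformizer_nonunit. Qed.

Lemma uniformizer_nonunitU : nonunits U t.
Proof. by have [_ /(_ t) [_ /(_ uniformizer_nonunit) []]] := domU. Qed.

(* If [t = 0] then [S] is a field, so [U] is all of [K]. *)
Lemma uniformizer_neq0 : t != 0.
Proof.
apply/eqP => t0; have [p [p0 Up NUpi]] := prime_chain1_witness (proj1 dimU).
have inv_mem c : S c -> c != 0 -> S c^-1.
  move=> Sc c0; apply: not_nonunits_inv Sc _ => /tS [a [_ ca]].
  by move: c0; rewrite ca t0 mulr0 eqxx.
have [a [b [Sa Sb b0 pab]]] := fracS p.
have a0 : a != 0 by apply: contra_neq p0 => a0; rewrite pab a0 mul0r.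
apply/NUpi/(proj1 domU); rewrite pab invf_div.
by apply: (subringM sS) Sb _; apply: inv_mem.
Qed.

Lemma uniformizer_inv_notin : ~ S t^-1.
Proof.
move=> Sti; case: uniformizer_nonunit => _; apply.
by exists t^-1; rewrite divff //; apply: uniformizer_neq0.
Qed.

Lemma not_divisible_pow x : S x -> x != 0 ->
  exists n, ~ exists a, S a /\ x = t ^+ n * a.
Proof.
move=> Sx x0; apply: NNPP => H; move/eqP: x0; apply.
apply: (krull_dim1_infinitely_divisible vU uniformizer_neq0 uniformizer_nonunitU dimU).
split; first exact: (proj1 domU).
move=> n; have [a [Sa ->]] : exists a, S a /\ x = t ^+ n * a.
  by apply: NNPP => Hn; apply: H; exists n.
by exists a; split => //; apply: (proj1 domU).
Qed.

(* Strip factors [t] from [x] until the cofactor leaves [tS], hence is a unit. *)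
Lemma has_order_nat x : S x -> x != 0 -> exists n : nat, has_order S t x n.
Proof.
move=> Sx x0; have [n] := not_divisible_pow Sx x0.
elim: n => [|n IHn] Nxn.
  by exfalso; apply: Nxn; exists x; rewrite expr0 mul1r.
have [[a [Sa xa]]|] := classic (exists a, S a /\ x = t ^+ n * a); last exact: IHn.
have Na : ~ nonunits S a.
  move/tS => [b [Sb ab]]; apply: Nxn; exists b; split => //.
  by rewrite xa ab exprSr -mulrA [t * b]mulrC.
have a0 : a != 0 by apply: contra_neq x0 => a0; rewrite xa a0 mulr0.
by exists n, a; split => //; split => //; apply: not_nonunits_inv.
Qed.

Lemma has_order_exists z : z != 0 -> exists k, has_order S t z k.
Proof.
move=> z0; have [a [b [Sa Sb b0 zab]]] := fracS z.
have a0 : a != 0 by apply: contra_neq z0 => a0; rewrite zab a0 mul0r.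
have [m am] := has_order_nat Sa a0; have [n bn] := has_order_nat Sb b0.
exists (m%:Z + - n%:Z); rewrite zab.
exact: has_orderM sS uniformizer_neq0 _ _ _ _ am (has_orderV bn).
Qed.

Lemma DVR_of_principal_dominated : DVR S.
Proof.
exact: (DVR_of_uniformizer sS uniformizer_mem uniformizer_neq0
          uniformizer_inv_notin has_order_exists).
Qed.

End PrincipalDominated.

Section UnionSeq.
Variables (K : fieldType) (Rs : nat -> K -> Prop).
Hypothesis sRs : forall i, subring (Rs i).
Hypothesis Rs_mono : forall i, ksubset (Rs i) (Rs i.+1).

Lemma union_seq_mono i j : (i <= j)%N -> ksubset (Rs i) (Rs j).
Proof.
move=> /subnK <-; elim: (j - i)%N => [|k IHk] x Rx //.
by rewrite addSn; apply/Rs_mono/IHk.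
Qed.

Lemma union_seq_subring : subring (union_seq Rs).
Proof.
have common x y : union_seq Rs x -> union_seq Rs y ->
    exists i, Rs i x /\ Rs i y.
  move=> [i Rx] [j Ry]; exists (maxn i j).
  split; first exact: union_seq_mono (leq_maxl i j) _ Rx.
  exact: union_seq_mono (leq_maxr i j) _ Ry.
split; [by exists 0%N; apply: subring0|by exists 0%N; apply: subring1| |].
- by move=> x y /common /[apply] -[i [Rx Ry]]; exists i; apply: subringB.
- by move=> x y /common /[apply] -[i [Rx Ry]]; exists i; apply: subringM.
Qed.

Lemma union_seq_frac_field :
  frac_field_is_K (Rs 0%N) -> frac_field_is_K (union_seq Rs).
Proof.
move=> frac0 z; have [a [b [Ra Rb b0 ->]]] := frac0 z.
by exists a, b; split => //; exists 0%N.
Qed.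

End UnionSeq.

Lemma dominates_refl (K : fieldType) (A : K -> Prop) : dominates A A.
Proof. by split => // z; split => [[]|[Az Nz]]. Qed.

Theorem corollary8p5 (K : fieldType) (Rs : nat -> K -> Prop) :
  frac_field_is_K (Rs 0%N) ->
  (forall i, regular_local (Rs i) /\
             exists d, krull_dim (Rs i) d /\ (2 <= d)%N) ->
  (forall i, ksubset (Rs i) (Rs i.+1) /\ ~ ksubset (Rs i.+1) (Rs i)) ->
  (forall i, local_quadratic_transform (Rs i) (Rs i.+1)) ->
  DVR (union_seq Rs) <->
  (principal_ideal (union_seq Rs) (nonunits (union_seq Rs)) /\
   exists U : K -> Prop,
     [/\ valuation_ring U, krull_dim U 1 & dominates U (union_seq Rs)]).
Proof.
move=> frac0 Rs_reg Rs_chain _.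
have sRs i : subring (Rs i) by have [[[]]] := Rs_reg i.
have sS := union_seq_subring sRs (fun i => proj1 (Rs_chain i)).
split.
- move=> [v [vM vD vS vA]]; split; first exact: DVR_maximal_principal vM vD vS vA.
  exists (union_seq Rs); split; last exact: dominates_refl.
  + exact: DVR_valuation_ring vM vD vA.
  + exact: DVR_krull_dim1 vM vD vS vA.
- move=> [[t [_ tS]] [U [vU dimU domU]]].
  exact: DVR_of_principal_dominated sS (union_seq_frac_field frac0) tS vU dimU domU.
Qed.
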